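(* Let $M$ be a $(B,A)$-bimodule with $M_A$ finitely generated projective, $S=\mathrm{End}_A(M)$, and $\mathcal{C}=M^*\otimes_BM$ the comatrix $A$-coring. Suppose $\gamma:\mathcal{C}\otimes_A\mathcal{C}\to A$ is a pre-cointegral for $\mathcal{C}$. Identify $S\cong M\otimes_AM^*$ (via $m\otimes\varphi\mapsto(x\mapsto m\varphi(x))$), so that $S\otimes_BS\otimes_BS\cong M\otimes_A\mathcal{C}\otimes_A\mathcal{C}\otimes_AM^*$, and define $\tilde\gamma:S\otimes_BS\otimes_BS\to S$ by $\tilde\gamma(m\otimes\varphi\otimes m'\otimes\varphi'\otimes m''\otimes\varphi'')=m\,\gamma(\varphi\otimes m'\otimes\varphi'\otimes m'')\otimes\varphi''$ (i.e. $\tilde\gamma=M\otimes\gamma\otimes M^*$ followed by $M\otimes_AA\otimes_AM^*\cong M\otimes_AM^*$). Then $\tilde\gamma$, regarded as a map $(S\otimes_BS)\otimes_S(S\otimes_BS)\cong S\otimes_BS\otimes_BS\to S$, is a pre-cointegral for the Sweedler $S$-coring $S\otimes_BS$.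
   Context: All rings are associative with $1$. For a $(B,A)$-bimodule $M$ with $M_A$ finitely generated projective, $M^*=\mathrm{Hom}_A(M,A)$ is an $(A,B)$-bimodule, and with a finite dual basis $\{e_i,e_i^*\}_{i\in I}$ the comatrix $A$-coring is $M^*\otimes_BM$ with coproduct $\varphi\otimes m\mapsto\sum_i\varphi\otimes e_i\otimes e_i^*\otimes m$ and counit $\varphi\otimes m\mapsto\varphi(m)$. $S=\mathrm{End}_A(M)$ with composition, and $B\to S$, $b\mapsto(m\mapsto bm)$. The Sweedler $S$-coring $S\otimes_BS$ has coproduct $s\otimes s'\mapsto s\otimes1_S\otimes s'$ and counit $s\otimes s'\mapsto ss'$. For an $A$-coring $\mathcal{C}$ with coproduct $\Delta(c)=\sum c_{(1)}\otimes c_{(2)}$, a pre-cointegral is an $(A,A)$-bimodule map $\gamma:\mathcal{C}\otimes_A\mathcal{C}\to A$ such that $\sum c_{(1)}\gamma(c_{(2)}\otimes c')=\sum\gamma(c\otimes c'_{(1)})c'_{(2)}$ for all $c,c'\in\mathcal{C}$. *)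

From HB Require Import structures.
From mathcomp Require Import all_boot all_algebra.
Set Implicit Arguments.
Unset Strict Implicit.
Unset Printing Implicit Defensive.
Import GRing.Theory.
Local Open Scope ring_scope.

(* Tensor product X (x)_R Y of a right R-module X and a left R-module Y,    *)
(* presented as formal sums (lists of pairs) modulo the congruence          *)
(* generated by the defining relations of the tensor product.  The quotient *)
(* of the free commutative monoid on X*Y by this congruence is exactly the  *)
(* abelian group X (x)_R Y; [teq s t] means "s and t are equal in X (x)_R Y".*)
Section Tensor.
Variables (R X Y : Type) (addX : X -> X -> X) (oppX : X -> X)
  (addY : Y -> Y -> Y) (rX : X -> R -> X) (lY : R -> Y -> Y).

Inductive teq : seq (X * Y) -> seq (X * Y) -> Prop :=
| teq_refl s : teq s s
| teq_sym s t : teq s t -> teq t s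
| teq_trans s t u : teq s t -> teq t u -> teq s u
| teq_cat s1 s2 t1 t2 : teq s1 t1 -> teq s2 t2 -> teq (s1 ++ s2) (t1 ++ t2)
| teq_swap s t : teq (s ++ t) (t ++ s)
| teq_addl x1 x2 y : teq [:: (addX x1 x2, y)] [:: (x1, y); (x2, y)]
| teq_addr x y1 y2 : teq [:: (x, addY y1 y2)] [:: (x, y1); (x, y2)]
| teq_bal x r y : teq [:: (rX x r, y)] [:: (x, lY r y)]
| teq_opp x y : teq [:: (x, y); (oppX x, y)] [::].

End Tensor.

(* Pre-cointegrals for a K-coring C = X (x)_R Y whose coproduct is given on  *)
(* generators x (x) y by a formal sum in C (x)_K C = X (x)_R Y (x)_K X (x)_R Y*)
(* (quadruples (x1,y1,x2,y2) stand for (x1 (x) y1) (x)_K (x2 (x) y2)).       *)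
(* A (K,K)-bimodule map gam : C (x)_K C -> K is given, via the universal     *)
(* property of the tensor product, by its values on generators             *)
(* gam x y x' y' = gam((x (x) y) (x)_K (x' (x) y')), which must be additive  *)
(* in each argument, balanced, and K-bilinear on the outside.              *)
Section PreCointegral.
Variables (R K X Y : Type)
  (addK mulK : K -> K -> K)
  (addX : X -> X -> X) (oppX : X -> X) (addY : Y -> Y -> Y)
  (rX : X -> R -> X) (lY : R -> Y -> Y)
  (lKX : K -> X -> X) (rYK : Y -> K -> Y)
  (delta : X -> Y -> seq (X * Y * X * Y)).

(* gam induces a well defined additive map on C (x)_K C *)
Definition tensor_map4 (gam : X -> Y -> X -> Y -> K) : Prop :=
  [/\ (forall x1 x2 y x' y',
          gam (addX x1 x2) y x' y' = addK (gam x1 y x' y') (gam x2 y x' y')),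
      (forall x y1 y2 x' y',
          gam x (addY y1 y2) x' y' = addK (gam x y1 x' y') (gam x y2 x' y')),
      (forall x y x1' x2' y',
          gam x y (addX x1' x2') y' = addK (gam x y x1' y') (gam x y x2' y')),
      (forall x y x' y1' y2',
          gam x y x' (addY y1' y2') = addK (gam x y x' y1') (gam x y x' y2'))
    & [/\ (forall x r y x' y', gam (rX x r) y x' y' = gam x (lY r y) x' y'),
          (forall x y k x' y', gam x (rYK y k) x' y' = gam x y (lKX k x') y')
        & (forall x y x' r y', gam x y (rX x' r) y' = gam x y x' (lY r y'))]].

Definition bimod_map4 (gam : X -> Y -> X -> Y -> K) : Prop :=
  (forall k x y x' y', gam (lKX k x) y x' y' = mulK k (gam x y x' y')) /\
  (forall x y x' y' k, gam x y x' (rYK y' k) = mulK (gam x y x' y') k).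

(* sum_{(c)} c_(1) gam(c_(2) (x) c')  for formal sums c, c' *)
Definition pc_lhs (gam : X -> Y -> X -> Y -> K) (c c' : seq (X * Y))
  : seq (X * Y) :=
  flatten [seq flatten [seq [seq (q.1.1.1, rYK q.1.1.2 (gam q.1.2 q.2 p'.1 p'.2))
                            | q <- delta p.1 p.2] | p' <- c'] | p <- c].

(* sum_{(c')} gam(c (x) c'_(1)) c'_(2)  for formal sums c, c' *)
Definition pc_rhs (gam : X -> Y -> X -> Y -> K) (c c' : seq (X * Y))
  : seq (X * Y) :=
  flatten [seq flatten [seq [seq (lKX (gam p.1 p.2 q.1.1.1 q.1.1.2) q.1.2, q.2)
                            | q <- delta p'.1 p'.2] | p' <- c'] | p <- c].

Definition pre_cointegral (gam : X -> Y -> X -> Y -> K) : Prop :=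
  [/\ tensor_map4 gam, bimod_map4 gam &
      forall c c' : seq (X * Y),
        teq addX oppX addY rX lY (pc_lhs gam c c') (pc_rhs gam c c')].

End PreCointegral.

Record bimod (B A : pzRingType) := Bimod {
  bm_car :> zmodType;
  bm_l : B -> bm_car -> bm_car;
  bm_r : bm_car -> A -> bm_car;
  bm_lD : forall b m1 m2, bm_l b (m1 + m2) = bm_l b m1 + bm_l b m2;
  bm_lDs : forall b1 b2 m, bm_l (b1 + b2) m = bm_l b1 m + bm_l b2 m;
  bm_lM : forall b1 b2 m, bm_l (b1 * b2) m = bm_l b1 (bm_l b2 m);
  bm_l1 : forall m, bm_l 1 m = m;
  bm_rD : forall m1 m2 a, bm_r (m1 + m2) a = bm_r m1 a + bm_r m2 a;
  bm_rDs : forall m a1 a2, bm_r m (a1 + a2) = bm_r m a1 + bm_r m a2;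
  bm_rM : forall m a1 a2, bm_r m (a1 * a2) = bm_r (bm_r m a1) a2;
  bm_r1 : forall m, bm_r m 1 = m;
  bm_lr : forall b m a, bm_r (bm_l b m) a = bm_l b (bm_r m a)
}.

Lemma additive_opp (U V : zmodType) (f : U -> V) :
  (forall x y, f (x + y) = f x + f y) -> forall x, f (- x) = - f x.
Proof.
move=> fD x.
have f0 : f 0 = 0.
  have h := fD 0 0; rewrite addr0 in h.
  by apply: (addrI (f 0)); rewrite addr0 -h.
apply: (addrI (f x)); rewrite -fD subrr f0 subrr //.
Qed.

Section Bimod.
Variables (B A : pzRingType) (M : bimod B A).

Lemma bm_rN (m : M) a : bm_r m (- a) = - bm_r m a.
Proof. by apply: (@additive_opp A M (bm_r m)) => x y; rewrite bm_rDs. Qed.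

Lemma bm_rNm (m : M) a : bm_r (- m) a = - bm_r m a.
Proof. by apply: (@additive_opp M M (fun x => bm_r x a)) => x y; rewrite bm_rD. Qed.

Lemma bm_lN b (m : M) : bm_l b (- m) = - bm_l b m.
Proof. by apply: (@additive_opp M M (bm_l b)) => x y; rewrite bm_lD. Qed.

Lemma bm_r0m a : bm_r (0 : M) a = 0.
Proof.
have h := bm_rD (0 : M) 0 a; rewrite addr0 in h.
by apply: (addrI (bm_r (0 : M) a)); rewrite addr0 -h.
Qed.

Record dual := Dual {
  dfun :> M -> A;
  dfun_add : forall x y, dfun (x + y) = dfun x + dfun y;
  dfun_lin : forall x a, dfun (bm_r x a) = dfun x * a
}.

Definition dual_add (f g : dual) : dual.
Proof.
refine (@Dual (fun x => f x + g x) _ _).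
- by move=> x y; rewrite !dfun_add addrACA.
- by move=> x a; rewrite !dfun_lin mulrDl.
Defined.

Definition dual_opp (f : dual) : dual.
Proof.
refine (@Dual (fun x => - f x) _ _).
- by move=> x y; rewrite dfun_add opprD.
- by move=> x a; rewrite dfun_lin mulNr.
Defined.

Definition dual_rB (f : dual) (b : B) : dual.
Proof.
refine (@Dual (fun x => f (bm_l b x)) _ _).
- by move=> x y; rewrite bm_lD dfun_add.
- by move=> x a; rewrite -bm_lr dfun_lin.
Defined.

Definition dual_lA (a : A) (f : dual) : dual.
Proof.
refine (@Dual (fun x => a * f x) _ _).
- by move=> x y; rewrite dfun_add mulrDr.
- by move=> x a'; rewrite dfun_lin mulrA.
Defined.

Record endo := Endo {
  efun :> M -> M;
  efun_add : forall x y, efun (x + y) = efun x + efun y;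
  efun_lin : forall x a, efun (bm_r x a) = bm_r (efun x) a
}.

Definition endo_add (s t : endo) : endo.
Proof.
refine (@Endo (fun x => s x + t x) _ _).
- by move=> x y; rewrite !efun_add addrACA.
- by move=> x a; rewrite !efun_lin bm_rD.
Defined.

Definition endo_opp (s : endo) : endo.
Proof.
refine (@Endo (fun x => - s x) _ _).
- by move=> x y; rewrite efun_add opprD.
- by move=> x a; rewrite efun_lin bm_rNm.
Defined.

Definition endo_zero : endo.
Proof.
refine (@Endo (fun _ => 0) _ _).
- by move=> x y; rewrite addr0.
- by move=> x a; rewrite bm_r0m.
Defined.

Definition endo_id : endo.
Proof. by refine (@Endo (fun x => x) _ _). Defined.

Definition endo_comp (s t : endo) : endo.
Proof.
refine (@Endo (fun x => s (t x)) _ _).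
- by move=> x y; rewrite !efun_add.
- by move=> x a; rewrite !efun_lin.
Defined.

Definition endo_of_B (b : B) : endo.
Proof.
refine (@Endo (bm_l b) _ _).
- exact: bm_lD.
- by move=> x a; rewrite bm_lr.
Defined.

(* the image of m (x) f under M (x)_A M^* -> S : x |-> m f(x) *)
Definition endo_rank1 (m : M) (f : dual) : endo.
Proof.
refine (@Endo (fun x => bm_r m (f x)) _ _).
- by move=> x y; rewrite dfun_add bm_rDs.
- by move=> x a; rewrite dfun_lin bm_rM.
Defined.

Definition endo_sum (I : finType) (F : I -> endo) : endo :=
  \big[endo_add/endo_zero]_(i : I) F i.

(* The comatrix A-coring C = M^* (x)_B M built from the dual basis (e, es):  *)
(* Delta(f (x) m) = sum_i (f (x) e_i) (x)_A (e_i^* (x) m).                    *)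
Variables (n : nat) (e : 'I_n -> M) (es : 'I_n -> dual).

Definition comatrix_delta (f : dual) (m : M) : seq (dual * M * dual * M) :=
  [seq (f, e i, es i, m) | i <- enum 'I_n].

Definition comatrix_pre_cointegral (gam : dual -> M -> dual -> M -> A) : Prop :=
  @pre_cointegral B A dual M +%R *%R dual_add dual_opp +%R dual_rB (@bm_l _ _ M)
    dual_lA (@bm_r _ _ M) comatrix_delta gam.

(* The Sweedler S-coring S (x)_B S: Delta(s (x) s') = (s (x) 1) (x)_S (1 (x) s') *)
Definition sweedler_delta (s s' : endo) : seq (endo * endo * endo * endo) :=
  [:: (s, endo_id, endo_id, s')].

Definition sweedler_pre_cointegral (gam : endo -> endo -> endo -> endo -> endo)
  : Prop :=
  @pre_cointegral B endo endo endo endo_add endo_comp endo_add endo_opp endo_add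
    (fun s b => endo_comp s (endo_of_B b)) (fun b s => endo_comp (endo_of_B b) s)
    endo_comp endo_comp sweedler_delta gam.

(* gamma~ : S (x)_B S (x)_B S -> S.  Under S ~ M (x)_A M^*, whose inverse is  *)
(* s |-> sum_i s(e_i) (x) e_i^*, one has                                      *)
(* gamma~(s (x) s' (x) s'') =                                                *)
(*   sum_{i,j,k} s(e_i) gam(e_i^* (x) s'(e_j) (x) e_j^* (x) s''(e_k)) (x) e_k^* *)
Definition gamma_tilde (gam : dual -> M -> dual -> M -> A) (s s' s'' : endo)
  : endo :=
  endo_sum (fun i : 'I_n => endo_sum (fun j : 'I_n => endo_sum (fun k : 'I_n =>
    endo_rank1 (s (e i)) (dual_lA (gam (es i) (s' (e j)) (es j) (s'' (e k)))
                                  (es k))))).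

(* gamma~ viewed on (S (x)_B S) (x)_S (S (x)_B S) ~ S (x)_B S (x)_B S,        *)
(* (s1 (x) s2) (x)_S (s3 (x) s4) |-> s1 (x) s2 s3 (x) s4                      *)
Definition gamma_tilde4 (gam : dual -> M -> dual -> M -> A)
  (s1 s2 s3 s4 : endo) : endo :=
  gamma_tilde gam s1 (endo_comp s2 s3) s4.

End Bimod.

From mathcomp Require Import all_boot all_algebra.
From Stdlib Require Import FunctionalExtensionality ProofIrrelevance.
Set Implicit Arguments.
Unset Strict Implicit.
Unset Printing Implicit Defensive.
Import GRing.Theory.
Local Open Scope ring_scope.

(* Write each s in S as the sum over a of s(e_a) ⊗ e_a^*.  Then, in S ⊗_B S, both
   sides of the pre-cointegral identity for γ~ on (s1 ⊗ s2) ⊗_S (s3 ⊗ s4) are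
   sums over a, j, k of the images of the two sides of the identity for γ at
   c = e_a^* ⊗ s2 s3(e_j) and c' = e_j^* ⊗ s4(e_k), under the well-defined map
   M^* ⊗_B M → S ⊗_B S, f ⊗ m ↦ (s1(e_a) ⊗ f) ⊗ (m ⊗ e_k^* ).  Additivity and
   balancedness of γ~ reduce in the same way to those of γ. *)

Arguments teq_refl {R X Y addX oppX addY rX lY} s.
Arguments teq_addl {R X Y addX oppX addY rX lY} x1 x2 y.
Arguments teq_addr {R X Y addX oppX addY rX lY} x y1 y2.
Arguments teq_bal {R X Y addX oppX addY rX lY} x r y.
Arguments teq_opp {R X Y addX oppX addY rX lY} x y.

Lemma flatten_map_seq1 (I T : Type) (F : I -> T) (r : seq I) :
  flatten [seq [:: F i] | i <- r] = map F r.
Proof. by elim: r => //= i r ->. Qed.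

Section FormalSums.
Variables (R X Y : Type) (addX : X -> X -> X) (oppX : X -> X)
  (addY : Y -> Y -> Y) (rX : X -> R -> X) (lY : R -> Y -> Y).
Local Notation teqT := (teq addX oppX addY rX lY).

Lemma teq_flatten (I : Type) (r : seq I) (f g : I -> seq (X * Y)) :
  (forall i, teqT (f i) (g i)) -> teqT (flatten (map f r)) (flatten (map g r)).
Proof.
by move=> fg; elim: r => [|i r IHr] /=; [exact: teq_refl | exact: teq_cat].
Qed.

End FormalSums.

Section TensorMap.
Variables (R X1 Y1 X2 Y2 : Type)
  (addX1 : X1 -> X1 -> X1) (oppX1 : X1 -> X1) (addY1 : Y1 -> Y1 -> Y1)
  (rX1 : X1 -> R -> X1) (lY1 : R -> Y1 -> Y1)
  (addX2 : X2 -> X2 -> X2) (oppX2 : X2 -> X2) (addY2 : Y2 -> Y2 -> Y2)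
  (rX2 : X2 -> R -> X2) (lY2 : R -> Y2 -> Y2)
  (phi1 : X1 -> X2) (phi2 : Y1 -> Y2).
Hypotheses (phi1D : forall x x', phi1 (addX1 x x') = addX2 (phi1 x) (phi1 x'))
  (phi1N : forall x, phi1 (oppX1 x) = oppX2 (phi1 x))
  (phi2D : forall y y', phi2 (addY1 y y') = addY2 (phi2 y) (phi2 y'))
  (phi_bal : forall x r y, teq addX2 oppX2 addY2 rX2 lY2
     [:: (phi1 (rX1 x r), phi2 y)] [:: (phi1 x, phi2 (lY1 r y))]).

Lemma teq_map s t : teq addX1 oppX1 addY1 rX1 lY1 s t ->
  teq addX2 oppX2 addY2 rX2 lY2
    [seq (phi1 p.1, phi2 p.2) | p <- s] [seq (phi1 p.1, phi2 p.2) | p <- t].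
Proof.
elim=> {s t} /=.
- by move=> s; exact: teq_refl.
- by move=> s t _; exact: teq_sym.
- by move=> s t u _ st _; exact: teq_trans st.
- by move=> s1 s2 t1 t2 _ st1 _ st2; rewrite !map_cat; exact: teq_cat.
- by move=> s t; rewrite !map_cat; exact: teq_swap.
- by move=> x1 x2 y; rewrite phi1D; exact: teq_addl.
- by move=> x y1 y2; rewrite phi2D; exact: teq_addr.
- exact: phi_bal.
- by move=> x y; rewrite phi1N; exact: teq_opp.
Qed.

End TensorMap.

Local Notation sweedler_teq M := (teq (@endo_add _ _ M) (@endo_opp _ _ M)
  (@endo_add _ _ M) (fun s b => endo_comp s (endo_of_B M b))
  (fun b s => endo_comp (endo_of_B M b) s)).

Lemma addr_idem0 (V : zmodType) (v : V) : v + v = v -> v = 0.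
Proof. by move=> vv; apply: (addrI v); rewrite addr0. Qed.

Section Endomorphisms.
Variables (B A : pzRingType) (M : bimod B A).

Lemma endo_ext (s t : endo M) : (forall x, s x = t x) -> s = t.
Proof.
case: s t => [f fD fA] [g gD gA] /= fg.
have fg' : f = g by apply: functional_extensionality.
by subst g; rewrite (proof_irrelevance _ fD gD) (proof_irrelevance _ fA gA).
Qed.

Lemma dual_ext (f g : dual M) : (forall x, f x = g x) -> f = g.
Proof.
case: f g => [f fD fA] [g gD gA] /= fg.
have fg' : f = g by apply: functional_extensionality.
by subst g; rewrite (proof_irrelevance _ fD gD) (proof_irrelevance _ fA gA).
Qed.

Lemma efun0 (s : endo M) : s 0 = 0.
Proof. by apply: addr_idem0; rewrite -efun_add addr0. Qed.

Lemma dfun0 (f : dual M) : f 0 = 0.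
Proof. by apply: addr_idem0; rewrite -dfun_add addr0. Qed.

Lemma bm_r0 (m : M) : bm_r m 0 = 0.
Proof. by apply: addr_idem0; rewrite -bm_rDs addr0. Qed.

Lemma bm_0l (m : M) : bm_l 0 m = 0.
Proof. by apply: addr_idem0; rewrite -bm_lDs addr0. Qed.

Lemma efun_sum (s : endo M) I (r : seq I) (F : I -> M) :
  s (\sum_(i <- r) F i) = \sum_(i <- r) s (F i).
Proof. exact: (big_morph _ (efun_add s) (efun0 s)). Qed.

Lemma dfun_sum (f : dual M) I (r : seq I) (F : I -> M) :
  f (\sum_(i <- r) F i) = \sum_(i <- r) f (F i).
Proof. exact: (big_morph _ (dfun_add f) (dfun0 f)). Qed.

Lemma bm_r_suml I (r : seq I) (F : I -> M) a :
  bm_r (\sum_(i <- r) F i) a = \sum_(i <- r) bm_r (F i) a.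
Proof.
exact: (big_morph (fun m : M => bm_r m a) (fun x y => bm_rD x y a) (bm_r0m M a)).
Qed.

Lemma bm_r_sumr I (r : seq I) (F : I -> A) (m : M) :
  bm_r m (\sum_(i <- r) F i) = \sum_(i <- r) bm_r m (F i).
Proof. exact: (big_morph (bm_r m) (bm_rDs m) (bm_r0 m)). Qed.

Definition esum I (r : seq I) (F : I -> endo M) :=
  \big[@endo_add _ _ M/endo_zero M]_(i <- r) F i.

Lemma esum_apply I (r : seq I) F x : esum r F x = \sum_(i <- r) F i x.
Proof. by elim: r => [|i r IHr]; rewrite /esum ?big_nil ?big_cons //= -IHr. Qed.

Lemma endo_sum_apply (I : finType) (F : I -> endo M) x :
  endo_sum F x = \sum_(i : I) F i x.
Proof. exact: esum_apply. Qed.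

Definition dual_zero : dual M.
Proof.
refine (@Dual _ _ M (fun _ => 0) _ _).
- by move=> *; rewrite addr0.
- by move=> *; rewrite mul0r.
Defined.

Definition dsum I (r : seq I) (F : I -> dual M) :=
  \big[@dual_add _ _ M/dual_zero]_(i <- r) F i.

Lemma dsum_apply I (r : seq I) F x : dsum r F x = \sum_(i <- r) F i x.
Proof. by elim: r => [|i r IHr]; rewrite /dsum ?big_nil ?big_cons //= -IHr. Qed.

Lemma dual_add00 : dual_add dual_zero dual_zero = dual_zero.
Proof. by apply: dual_ext => x /=; rewrite addr0. Qed.

End Endomorphisms.

Section SweedlerTensor.
Variables (B A : pzRingType) (M : bimod B A).
Local Notation teqS := (sweedler_teq M).
Local Notation ez := (endo_zero M).

Lemma teq_zerol y : teqS [:: (ez, y)] [::].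
Proof.
have ez2 : endo_add ez ez = ez by apply: endo_ext => x /=; rewrite addr0.
have dup : teqS [:: (ez, y); (ez, y)] [:: (ez, y)].
  by rewrite -{3}ez2; exact/teq_sym/teq_addl.
apply: teq_trans (teq_cat (teq_refl [:: (ez, y)]) (teq_sym (teq_opp ez y))) _.
exact: teq_trans (teq_cat dup (teq_refl _)) (teq_opp _ _).
Qed.

Lemma teq_zeror x : teqS [:: (x, ez)] [::].
Proof.
have ez0 : ez = endo_comp (endo_of_B M 0) ez.
  by apply: endo_ext => z /=; rewrite bm_0l.
have x0 : endo_comp x (endo_of_B M 0) = ez.
  by apply: endo_ext => z /=; rewrite bm_0l efun0.
rewrite {1}ez0; apply: teq_trans (teq_sym (teq_bal x 0 ez)) _.
by rewrite x0; exact: teq_zerol.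
Qed.

Lemma teq_esuml I (r : seq I) (F : I -> endo M) y (G : I -> seq (endo M * endo M)) :
  (forall i, teqS [:: (F i, y)] (G i)) -> teqS [:: (esum r F, y)] (flatten (map G r)).
Proof.
move=> FG; elim: r => [|i r IHr] /=; first by rewrite /esum big_nil; exact: teq_zerol.
rewrite /esum big_cons; apply: teq_trans (teq_addl _ _ _) _.
exact: teq_cat (FG i) IHr.
Qed.

Lemma teq_esumr I (r : seq I) (F : I -> endo M) x (G : I -> seq (endo M * endo M)) :
  (forall i, teqS [:: (x, F i)] (G i)) -> teqS [:: (x, esum r F)] (flatten (map G r)).
Proof.
move=> FG; elim: r => [|i r IHr] /=; first by rewrite /esum big_nil; exact: teq_zeror.
rewrite /esum big_cons; apply: teq_trans (teq_addr _ _ _) _.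
exact: teq_cat (FG i) IHr.
Qed.

Lemma teq_rank1_map (x : M) (phi : dual M) (s t : seq (dual M * M)) :
  teq (@dual_add _ _ M) (@dual_opp _ _ M) +%R (@dual_rB _ _ M) (@bm_l _ _ M) s t ->
  teqS [seq (endo_rank1 x p.1, endo_rank1 p.2 phi) | p <- s]
       [seq (endo_rank1 x p.1, endo_rank1 p.2 phi) | p <- t].
Proof.
move=> st; apply: (teq_map (phi1 := endo_rank1 x)
  (phi2 := fun m => endo_rank1 m phi) _ _ _ _ st) => [f f'|f|m m'|f b m].
- by apply: endo_ext => z /=; rewrite bm_rDs.
- by apply: endo_ext => z /=; rewrite bm_rN.
- by apply: endo_ext => z /=; rewrite bm_rD.
- have -> : endo_rank1 x (dual_rB f b) = endo_comp (endo_rank1 x f) (endo_of_B M b).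
    exact: endo_ext.
  have -> : endo_rank1 (bm_l b m) phi = endo_comp (endo_of_B M b) (endo_rank1 m phi).
    by apply: endo_ext => z /=; rewrite bm_lr.
  exact: teq_bal.
Qed.

End SweedlerTensor.

Section GammaTilde.
Variables (B A : pzRingType) (M : bimod B A) (n : nat)
  (e : 'I_n -> M) (es : 'I_n -> dual M).
Hypothesis dual_basis : forall m : M, m = \sum_(i < n) bm_r (e i) (es i m).
Variable gam : dual M -> M -> dual M -> M -> A.
Hypothesis gam_pc : comatrix_pre_cointegral e es gam.

Local Notation r := (index_enum 'I_n).
Local Notation gt4 := (gamma_tilde4 e es gam).
Local Notation teqS := (sweedler_teq M).

Lemma gam_add1 f1 f2 m f' m' :
  gam (dual_add f1 f2) m f' m' = gam f1 m f' m' + gam f2 m f' m'.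
Proof. by case: gam_pc => [[]]. Qed.
Lemma gam_add2 f m1 m2 f' m' :
  gam f (m1 + m2) f' m' = gam f m1 f' m' + gam f m2 f' m'.
Proof. by case: gam_pc => [[]]. Qed.
Lemma gam_add3 f m f1' f2' m' :
  gam f m (dual_add f1' f2') m' = gam f m f1' m' + gam f m f2' m'.
Proof. by case: gam_pc => [[]]. Qed.
Lemma gam_add4 f m f' m1' m2' :
  gam f m f' (m1' + m2') = gam f m f' m1' + gam f m f' m2'.
Proof. by case: gam_pc => [[]]. Qed.
Lemma gam_bal1 f b m f' m' : gam (dual_rB f b) m f' m' = gam f (bm_l b m) f' m'.
Proof. by case: gam_pc => [[_ _ _ _ []]]. Qed.
Lemma gam_bal2 f m a f' m' : gam f (bm_r m a) f' m' = gam f m (dual_lA a f') m'.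
Proof. by case: gam_pc => [[_ _ _ _ []]]. Qed.
Lemma gam_bal3 f m f' b m' : gam f m (dual_rB f' b) m' = gam f m f' (bm_l b m').
Proof. by case: gam_pc => [[_ _ _ _ []]]. Qed.
Lemma gam_scalel a f m f' m' : gam (dual_lA a f) m f' m' = a * gam f m f' m'.
Proof. by case: gam_pc => [_ []]. Qed.
Lemma gam_scaler f m f' m' a : gam f m f' (bm_r m' a) = gam f m f' m' * a.
Proof. by case: gam_pc => [_ []]. Qed.

Lemma gam_sum1 I (rr : seq I) F m f' m' :
  gam (dsum rr F) m f' m' = \sum_(i <- rr) gam (F i) m f' m'.
Proof.
apply: (big_morph (fun f => gam f m f' m') (fun f1 f2 => gam_add1 f1 f2 m f' m')).
by apply: addr_idem0; rewrite -gam_add1 dual_add00.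
Qed.

Lemma gam_sum2 I (rr : seq I) (F : I -> M) f f' m' :
  gam f (\sum_(i <- rr) F i) f' m' = \sum_(i <- rr) gam f (F i) f' m'.
Proof.
apply: (big_morph (fun y => gam f y f' m') (fun m1 m2 => gam_add2 f m1 m2 f' m')).
by apply: addr_idem0; rewrite -gam_add2 addr0.
Qed.

Lemma gam_sum3 I (rr : seq I) F f m m' :
  gam f m (dsum rr F) m' = \sum_(i <- rr) gam f m (F i) m'.
Proof.
apply: (big_morph (fun f1 => gam f m f1 m') (fun f1 f2 => gam_add3 f m f1 f2 m')).
by apply: addr_idem0; rewrite -gam_add3 dual_add00.
Qed.

Lemma gam_sum4 I (rr : seq I) (F : I -> M) f m f' :
  gam f m f' (\sum_(i <- rr) F i) = \sum_(i <- rr) gam f m f' (F i).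
Proof.
apply: (big_morph (gam f m f') (gam_add4 f m f')).
by apply: addr_idem0; rewrite -gam_add4 addr0.
Qed.

Lemma dual_expand (h : dual M) : h = dsum r (fun l => dual_lA (h (e l)) (es l)).
Proof.
apply: dual_ext => x; rewrite dsum_apply {1}[x]dual_basis dfun_sum.
by apply: eq_bigr => l _; rewrite dfun_lin.
Qed.

Lemma endo_expand (s : endo M) : s = esum r (fun l => endo_rank1 (s (e l)) (es l)).
Proof.
apply: endo_ext => x; rewrite esum_apply {1}[x]dual_basis efun_sum.
by apply: eq_bigr => l _; rewrite efun_lin.
Qed.

Lemma gamma_tildeE s s' s'' z :
  gamma_tilde e es gam s s' s'' z =
  \sum_(i <- r) \sum_(j <- r) \sum_(k <- r)
     bm_r (s (e i)) (gam (es i) (s' (e j)) (es j) (s'' (e k)) * es k z).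
Proof.
rewrite /gamma_tilde endo_sum_apply; apply: eq_bigr => i _.
by rewrite endo_sum_apply; apply: eq_bigr => j _; rewrite endo_sum_apply.
Qed.

Lemma gamma_tilde4_apply s1 s2 s3 s4 z :
  gt4 s1 s2 s3 s4 z =
  \sum_(i <- r) \sum_(j <- r) bm_r (s1 (e i)) (gam (es i) (s2 (s3 (e j))) (es j) (s4 z)).
Proof.
rewrite /gamma_tilde4 gamma_tildeE; apply: eq_bigr => i _; apply: eq_bigr => j _.
rewrite -bm_r_sumr {2}[z]dual_basis efun_sum gam_sum4; congr bm_r.
by apply: eq_bigr => k _; rewrite efun_lin gam_scaler.
Qed.

Lemma sum_gam_bal1 (s : endo M) b m f' m' :
  \sum_(i <- r) bm_r (s (bm_l b (e i))) (gam (es i) m f' m') =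
  \sum_(i <- r) bm_r (s (e i)) (gam (es i) (bm_l b m) f' m').
Proof.
transitivity (\sum_(i <- r) \sum_(l <- r)
    bm_r (bm_r (s (e l)) (es l (bm_l b (e i)))) (gam (es i) m f' m')).
  apply: eq_bigr => i _; rewrite -bm_r_suml; congr bm_r.
  by rewrite {1}[bm_l b _]dual_basis efun_sum; apply: eq_bigr => l _; rewrite efun_lin.
rewrite exchange_big /=; apply: eq_bigr => l _.
rewrite -gam_bal1 (dual_expand (dual_rB (es l) b)) gam_sum1 bm_r_sumr.
by apply: eq_bigr => i _; rewrite gam_scalel bm_rM.
Qed.

Lemma sum_gam_bal3 f (s : endo M) b m' :
  \sum_(j <- r) gam f (s (bm_l b (e j))) (es j) m' =
  \sum_(j <- r) gam f (s (e j)) (es j) (bm_l b m').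
Proof.
transitivity (\sum_(j <- r) \sum_(l <- r)
    gam f (bm_r (s (e l)) (es l (bm_l b (e j)))) (es j) m').
  apply: eq_bigr => j _; rewrite -gam_sum2; congr gam.
  by rewrite {1}[bm_l b _]dual_basis efun_sum; apply: eq_bigr => l _; rewrite efun_lin.
rewrite exchange_big /=; apply: eq_bigr => l _.
rewrite -gam_bal3 (dual_expand (dual_rB (es l) b)) gam_sum3.
by apply: eq_bigr => j _; rewrite gam_bal2.
Qed.

Lemma gamma_tilde4_tensor_map :
  tensor_map4 (@endo_add _ _ M) (@endo_add _ _ M) (@endo_add _ _ M)
    (fun s b => endo_comp s (endo_of_B M b)) (fun b s => endo_comp (endo_of_B M b) s)
    (@endo_comp _ _ M) (@endo_comp _ _ M) gt4.
Proof.
split=> [x1 x2 y x' y'|x y1 y2 x' y'|x y x1' x2' y'|x y x' y1' y2'|];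
  try (apply: endo_ext => z; rewrite [RHS]/= !gamma_tilde4_apply -big_split;
       apply: eq_bigr => i _; rewrite -big_split; apply: eq_bigr => j _ /=).
- exact: bm_rD.
- by rewrite gam_add2 bm_rDs.
- by rewrite efun_add gam_add2 bm_rDs.
- by rewrite gam_add4 bm_rDs.
split=> [x b y x' y'|x y a x' y'|x y x' b y']; apply: endo_ext => z;
  rewrite !gamma_tilde4_apply //=.
- by rewrite exchange_big [RHS]exchange_big; apply: eq_bigr => j _; exact: sum_gam_bal1.
- apply: eq_bigr => i _; rewrite -!bm_r_sumr; congr bm_r.
  exact: (sum_gam_bal3 _ (endo_comp y x')).
Qed.

Lemma gamma_tilde4_bimod_map :
  bimod_map4 (@endo_comp _ _ M) (@endo_comp _ _ M) (@endo_comp _ _ M) gt4.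
Proof.
split=> [a x y x' y'|x y x' y' a]; apply: endo_ext => z;
  rewrite [RHS]/= !gamma_tilde4_apply //.
rewrite efun_sum; apply: eq_bigr => i _.
by rewrite efun_sum; apply: eq_bigr => j _; rewrite /= efun_lin.
Qed.

Lemma gamma_tilde4_id_l s2 s3 s4 :
  endo_comp (endo_id M) (gt4 (endo_id M) s2 s3 s4) =
  esum r (fun j => esum r (fun k => esum r (fun i =>
    endo_rank1 (bm_r (e i) (gam (es i) (s2 (s3 (e j))) (es j) (s4 (e k)))) (es k)))).
Proof.
apply: endo_ext => z; rewrite esum_apply [LHS]gamma_tildeE exchange_big /=.
apply: eq_bigr => j _; rewrite esum_apply exchange_big /=; apply: eq_bigr => k _.
by rewrite esum_apply; apply: eq_bigr => i _; rewrite /= bm_rM.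
Qed.

Lemma gamma_tilde4_id_r s1 s2 s3 :
  endo_comp (gt4 s1 s2 s3 (endo_id M)) (endo_id M) =
  esum r (fun i => esum r (fun j => esum r (fun l =>
    endo_rank1 (s1 (e i)) (dual_lA (gam (es i) (s2 (s3 (e j))) (es j) (e l)) (es l))))).
Proof.
apply: endo_ext => z; rewrite esum_apply [LHS]gamma_tildeE.
apply: eq_bigr => i _; rewrite esum_apply; apply: eq_bigr => j _.
by rewrite esum_apply.
Qed.


Lemma gamma_tilde4_pc_pair s1 s2 s3 s4 :
  teqS [:: (s1, endo_comp (endo_id M) (gt4 (endo_id M) s2 s3 s4))]
       [:: (endo_comp (gt4 s1 s2 s3 (endo_id M)) (endo_id M), s4)].
Proof.
rewrite gamma_tilde4_id_l gamma_tilde4_id_r {1}(endo_expand s1) {2}(endo_expand s4).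
have lhsE : teqS
    [:: (esum r (fun a => endo_rank1 (s1 (e a)) (es a)),
         esum r (fun j => esum r (fun k => esum r (fun i => endo_rank1
           (bm_r (e i) (gam (es i) (s2 (s3 (e j))) (es j) (s4 (e k)))) (es k)))))]
    (flatten [seq flatten [seq flatten [seq flatten [seq
       [:: (endo_rank1 (s1 (e a)) (es a), endo_rank1
             (bm_r (e i) (gam (es i) (s2 (s3 (e j))) (es j) (s4 (e k)))) (es k))]
       | i <- r] | k <- r] | j <- r] | a <- r]).
  apply: teq_esuml => a; apply: teq_esumr => j; apply: teq_esumr => k.
  by apply: teq_esumr => i; exact: teq_refl.
have rhsE : teqS
    [:: (esum r (fun a => esum r (fun j => esum r (fun l => endo_rank1 (s1 (e a))
           (dual_lA (gam (es a) (s2 (s3 (e j))) (es j) (e l)) (es l))))),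
         esum r (fun k => endo_rank1 (s4 (e k)) (es k)))]
    (flatten [seq flatten [seq flatten [seq flatten [seq
       [:: (endo_rank1 (s1 (e a))
              (dual_lA (gam (es a) (s2 (s3 (e j))) (es j) (e l)) (es l)),
            endo_rank1 (s4 (e k)) (es k))]
       | l <- r] | k <- r] | j <- r] | a <- r]).
  apply: teq_esuml => a; apply: teq_esuml => j; apply: teq_esumr => k.
  by apply: teq_esuml => l; exact: teq_refl.
apply: teq_trans lhsE _; apply: teq_trans (teq_sym rhsE).
apply: teq_flatten => a; apply: teq_flatten => j; apply: teq_flatten => k.
have pc : teq (@dual_add _ _ M) (@dual_opp _ _ M) +%R (@dual_rB _ _ M) (@bm_l _ _ M)
    (pc_lhs (@bm_r _ _ M) (comatrix_delta e es) gam
       [:: (es a, s2 (s3 (e j)))] [:: (es j, s4 (e k))])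
    (pc_rhs (@dual_lA _ _ M) (comatrix_delta e es) gam
       [:: (es a, s2 (s3 (e j)))] [:: (es j, s4 (e k))]) by case: gam_pc.
move: (teq_rank1_map (s1 (e a)) (es k) pc).
by rewrite /pc_lhs /pc_rhs /comatrix_delta /= !cats0 enumT -!map_comp !flatten_map_seq1.
Qed.

End GammaTilde.

Theorem lemma3p4 (B A : pzRingType) (M : bimod B A) (n : nat)
  (e : 'I_n -> M) (es : 'I_n -> dual M)
  (dual_basis : forall m : M, m = (\sum_(i < n) bm_r (e i) (es i m))%R)
  (gam : dual M -> M -> dual M -> M -> A) :
  comatrix_pre_cointegral e es gam ->
  sweedler_pre_cointegral (gamma_tilde4 e es gam).
Proof.
move=> gam_pc; split.
- exact: gamma_tilde4_tensor_map.
- exact: gamma_tilde4_bimod_map.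
move=> c c'; rewrite /pc_lhs /pc_rhs /sweedler_delta.
apply: teq_flatten => p; apply: teq_flatten => p' /=.
exact: gamma_tilde4_pc_pair.
Qed.
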